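(* Let $m\in\{0,1,2,\dots\}$ and let $\lambda$ be a lattice identity. Then $\lambda$ holds in the subgroup lattice $\mathrm{Sub}\,\mathbf A$ of every Abelian group $\mathbf A$ satisfying $mx=0$ (i.e., $x+\dots+x=0$ with $m$ summands; for $m=0$ this means all Abelian groups) if and only if the dual of $\lambda$ holds in all these subgroup lattices.
   Context: A lattice identity is $p=q$ (universally quantified) for lattice terms $p,q$ built from variables with $\vee,\wedge$. The dual of an identity is obtained by interchanging $\vee$ and $\wedge$ on both sides. In $\mathrm{Sub}\,\mathbf A$, meet is intersection and join is the generated subgroup (sum). *)

From mathcomp Require Import all_boot all_algebra.
Set Implicit Arguments. Unset Strict Implicit. Unset Printing Implicit Defensive.
Import GRing.Theory.
Local Open Scope ring_scope.

Inductive lterm : Type :=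
  | LVar of nat
  | LJoin of lterm & lterm
  | LMeet of lterm & lterm.

Fixpoint ldual (t : lterm) : lterm :=
  match t with
  | LVar i => LVar i
  | LJoin a b => LMeet (ldual a) (ldual b)
  | LMeet a b => LJoin (ldual a) (ldual b)
  end.

Definition is_subgroup (A : zmodType) (S : A -> Prop) : Prop :=
  S 0 /\ (forall x y, S x -> S y -> S (x - y)).

Definition sg_meet (A : zmodType) (S T : A -> Prop) : A -> Prop :=
  fun x => S x /\ T x.

Definition sg_join (A : zmodType) (S T : A -> Prop) : A -> Prop :=
  fun x => forall U : A -> Prop, is_subgroup U ->
    (forall y, S y -> U y) -> (forall y, T y -> U y) -> U x.

Fixpoint sg_eval (A : zmodType) (v : nat -> A -> Prop) (t : lterm) : A -> Prop :=
  match t with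
  | LVar i => v i
  | LJoin a b => sg_join (sg_eval v a) (sg_eval v b)
  | LMeet a b => sg_meet (sg_eval v a) (sg_eval v b)
  end.

Definition holds_in_Sub (A : zmodType) (p q : lterm) : Prop :=
  forall v : nat -> A -> Prop, (forall i, is_subgroup (v i)) ->
    forall x : A, sg_eval v p x <-> sg_eval v q x.

Definition holds_in_Sub_exp (m : nat) (p q : lterm) : Prop :=
  forall A : zmodType, (forall x : A, x *+ m = 0) -> holds_in_Sub A p q.

(* An identity fails in Sub A iff some inclusion p <= q fails at an element, and the
   failure is witnessed by finitely many elements; pulling back along Z^n -> A gives a
   failure in Sub Z^n in which every subgroup contains m Z^n.  The annihilator
   S |-> {c in Q^n | c.s in Z for all s in S} turns joins of subgroups of Z^n into
   meets, and, because Q/Z is an injective group (characters extend), meets into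
   joins; it also separates points.  So the annihilators refute the dual inclusion.
   For m = 0 they live in Sub Q^n; for m > 0 they lie between Z^n and (1/m) Z^n, an
   interval of Sub Q^n isomorphic to Sub (Z/mZ)^n. *)

From HB Require Import structures.
From mathcomp Require Import all_boot all_order all_algebra.
From mathcomp Require Import boolp ring.
Set Implicit Arguments. Unset Strict Implicit. Unset Printing Implicit Defensive.
Import Order.TTheory GRing.Theory Num.Theory.
Local Open Scope ring_scope.

Section SubgroupLattice.
Variable A : zmodType.
Implicit Types (S T U : A -> Prop) (v : nat -> A -> Prop).

Lemma subgroup0 S : is_subgroup S -> S 0.
Proof. by case. Qed.

Lemma subgroupB S x y : is_subgroup S -> S x -> S y -> S (x - y).
Proof. by case=> _; apply. Qed.

Lemma subgroupN S x : is_subgroup S -> S x -> S (- x).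
Proof. by move=> HS Sx; rewrite -sub0r; apply: subgroupB (subgroup0 HS) Sx. Qed.

Lemma subgroupD S x y : is_subgroup S -> S x -> S y -> S (x + y).
Proof. by move=> HS Sx Sy; rewrite -[y]opprK; apply: subgroupB (subgroupN HS Sy). Qed.

Lemma subgroupMz S x k : is_subgroup S -> S x -> S (x *~ k).
Proof.
move=> HS Sx; have SMn m : S (x *+ m).
  by elim: m => [|m IHm]; [rewrite mulr0n; apply: subgroup0|rewrite mulrS; apply: subgroupD].
by case: k => m; [apply: SMn|apply: subgroupN].
Qed.

Lemma subgroup_sum S I (r : seq I) (F : I -> A) :
  is_subgroup S -> (forall i, S (F i)) -> S (\sum_(i <- r) F i).
Proof.
move=> HS SF; elim: r => [|i r IHr]; first by rewrite big_nil; apply: subgroup0.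
by rewrite big_cons; apply: subgroupD.
Qed.

Lemma sg_join_subgroup S T : is_subgroup (sg_join S T).
Proof.
split=> [U HU _ _|x y Sx Sy U HU SU TU]; first exact: subgroup0.
by apply: subgroupB; [|apply: Sx|apply: Sy].
Qed.

Lemma sg_joinl S T x : S x -> sg_join S T x.
Proof. by move=> Sx U _ SU _; apply: SU. Qed.

Lemma sg_joinr S T x : T x -> sg_join S T x.
Proof. by move=> Tx U _ _ TU; apply: TU. Qed.

Lemma sg_join_min S T U : is_subgroup U -> (forall y, S y -> U y) ->
  (forall y, T y -> U y) -> forall x, sg_join S T x -> U x.
Proof. by move=> HU SU TU x; apply. Qed.

Lemma sg_joinP S T x : is_subgroup S -> is_subgroup T ->
  sg_join S T x <-> exists s t, [/\ S s, T t & x = s + t].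
Proof.
move=> HS HT; split; last first.
  by case=> s [t [Ss Tt ->]]; apply: subgroupD (sg_join_subgroup S T) _ _;
    [apply: sg_joinl|apply: sg_joinr].
apply: (sg_join_min (U := fun x => exists s t, [/\ S s, T t & x = s + t]))
  => [|s Ss|t Tt]; last 2 first.
- by exists s, 0; rewrite addr0; split=> //; apply: subgroup0.
- by exists 0, t; rewrite add0r; split=> //; apply: subgroup0.
split; first by exists 0, 0; rewrite addr0; split=> //; apply: subgroup0.
move=> _ _ [s [t [Ss Tt ->]]] [s' [t' [Ss' Tt' ->]]].
by exists (s - s'), (t - t'); rewrite opprD addrACA; split=> //; apply: subgroupB.
Qed.

Lemma sg_join_ext S S' T T' : (forall x, S x <-> S' x) -> (forall x, T x <-> T' x) ->
  forall x, sg_join S T x <-> sg_join S' T' x.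
Proof.
move=> eqS eqT x; split=> Jx U HU SU TU; apply: Jx => // y.
- by move/eqS; apply: SU.
- by move/eqT; apply: TU.
- by move/eqS; apply: SU.
- by move/eqT; apply: TU.
Qed.

Lemma sg_eval_subgroup v : (forall i, is_subgroup (v i)) ->
  forall t, is_subgroup (sg_eval v t).
Proof.
move=> Hv; elim=> [i|s _ t _|s IHs t IHt] /=; [exact: Hv|exact: sg_join_subgroup|].
split; first by split; apply: subgroup0.
by move=> x y [Sx Tx] [Sy Ty]; split; apply: subgroupB.
Qed.

Lemma sg_eval_ext v v' : (forall i x, v i x <-> v' i x) ->
  forall t x, sg_eval v t x <-> sg_eval v' t x.
Proof.
move=> eqv; elim=> [i|s IHs t IHt|s IHs t IHt] x /=; first exact: eqv.
  exact: sg_join_ext.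
by rewrite /sg_meet IHs IHt.
Qed.

Definition sg_cyclic (y : A) : A -> Prop := fun z => exists k, z = y *~ k.

Lemma sg_cyclic_subgroup y : is_subgroup (sg_cyclic y).
Proof.
split; first by exists 0; rewrite mulr0z.
by move=> _ _ [k ->] [l ->]; exists (k - l); rewrite mulrzBr.
Qed.

Lemma sg_cyclic_gen y : sg_cyclic y y.
Proof. by exists 1; rewrite mulr1z. Qed.

End SubgroupLattice.

Lemma ldualK : involutive ldual.
Proof. by elim=> //= a -> b ->. Qed.

Section Morphisms.
Variables (G A : zmodType) (f : {additive G -> A}).
Implicit Types (S : A -> Prop) (v : nat -> A -> Prop).

Definition sg_image (w : G -> Prop) : A -> Prop := fun y => exists2 a, w a & f a = y.

Lemma comp_subgroup S : is_subgroup S -> is_subgroup (S \o f).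
Proof.
move=> HS; split=> [|x y Sx Sy] /=; first by rewrite raddf0; apply: subgroup0.
by rewrite raddfB; apply: subgroupB.
Qed.

Lemma sg_image_subgroup w : is_subgroup w -> is_subgroup (sg_image w).
Proof.
move=> Hw; split=> [|_ _ [a wa <-] [b wb <-]].
  by exists 0; [apply: subgroup0|rewrite raddf0].
by exists (a - b); [apply: subgroupB|rewrite raddfB].
Qed.

Lemma sg_eval_comp_le v : (forall i, is_subgroup (v i)) ->
  forall t a, sg_eval (fun i => v i \o f) t a -> sg_eval v t (f a).
Proof.
move=> Hv; elim=> [i|s IHs t IHt|s IHs t IHt] a //=; last first.
  by case=> [Sa Ta]; split; [apply: IHs|apply: IHt].
apply: (sg_join_min (U := sg_join (sg_eval v s) (sg_eval v t) \o f)).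
- exact/comp_subgroup/sg_join_subgroup.
- by move=> y /IHs; apply: sg_joinl.
- by move=> y /IHt; apply: sg_joinr.
Qed.

Lemma sg_eval_in_range v : (forall i, is_subgroup (v i)) ->
  (forall i y, v i y -> exists a, f a = y) ->
  forall t y, sg_eval v t y -> exists a, f a = y.
Proof.
move=> Hv vf; elim=> [i|s IHs t IHt|s IHs t _] y /=; first exact: vf.
  apply: (sg_join_min (U := fun y => exists a, f a = y)) => //.
  by split=> [|_ _ [a <-] [b <-]]; [exists 0; rewrite raddf0|exists (a - b); rewrite raddfB].
by case=> /IHs.
Qed.

Lemma sg_eval_comp v : (forall i, is_subgroup (v i)) ->
  (forall i y, v i y -> exists a, f a = y) ->
  forall t a, sg_eval (fun i => v i \o f) t a <-> sg_eval v t (f a).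
Proof.
move=> Hv vf t; split; first exact: sg_eval_comp_le.
have Hvf i : is_subgroup (v i \o f) by apply: comp_subgroup.
elim: t a => [i|s IHs t IHt|s IHs t IHt] a //=; last first.
  by case=> [Sa Ta]; split; [apply: IHs|apply: IHt].
rewrite !sg_joinP; try exact: sg_eval_subgroup.
case=> y [z [/[dup] Sy /(sg_eval_in_range Hv vf) [b fb] Tz Efa]].
exists b, (a - b); split; [by apply: IHs; rewrite fb| |by rewrite addrC subrK].
by apply: IHt; rewrite raddfB Efa fb addrC addKr.
Qed.

Lemma sg_eval_image (w : nat -> G -> Prop) : (forall i, is_subgroup (w i)) ->
  (forall i a, f a = 0 -> w i a) ->
  forall t a, sg_eval (fun i => sg_image (w i)) t (f a) <-> sg_eval w t a.
Proof.
move=> Hw kerw t a; rewrite -sg_eval_comp => [|i|i _ [b _ <-]]; last 2 first.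
- exact: sg_image_subgroup.
- by exists b.
apply: sg_eval_ext => i b /=; split=> [[c wc fc]|wb]; last by exists b.
rewrite -(subrK c b); apply: subgroupD => //.
by apply: kerw; rewrite raddfB fc subrr.
Qed.

End Morphisms.

Lemma sg_eval_finitely_generated (A : zmodType) (v : nat -> A -> Prop) t x :
  (forall i, is_subgroup (v i)) -> sg_eval v t x ->
  exists W : seq A, forall (G : zmodType) (g : {additive G -> A}),
    (forall w, w \in W -> exists a, g a = w) ->
    forall k, g k = x -> sg_eval (fun i => v i \o g) t k.
Proof.
move=> Hv; elim: t x => [i|s IHs t IHt|s IHs t IHt] x /=.
- by move=> vx; exists [::] => G g _ k /= ->.
- rewrite sg_joinP; try exact: sg_eval_subgroup.
  case=> y [z [/IHs [Ws HWs] /IHt [Wt HWt] ->]].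
  exists (y :: Ws ++ Wt) => G g gW k gk.
  have gWs w : w \in Ws -> exists a, g a = w by move=> Ww; apply: gW; rewrite !inE mem_cat Ww orbT.
  have gWt w : w \in Wt -> exists a, g a = w by move=> Ww; apply: gW; rewrite !inE mem_cat Ww !orbT.
  have [ky gky] := gW y (mem_head _ _).
  rewrite sg_joinP; try by apply: sg_eval_subgroup => i; apply: comp_subgroup.
  exists ky, (k - ky); split; [exact: HWs| |by rewrite addrC subrK].
  by apply: HWt => //; rewrite raddfB gk gky addrC addKr.
- case=> /IHs [Ws HWs] /IHt [Wt HWt]; exists (Ws ++ Wt) => G g gW k gk.
  by split; [apply: HWs|apply: HWt] => // w Ww; apply: gW; rewrite mem_cat Ww ?orbT.
Qed.

Definition eqmodZ (a b : rat) := a - b \is a Num.int.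

Lemma eqmodZ_refl a : eqmodZ a a.
Proof. by rewrite /eqmodZ subrr rpred0. Qed.

Lemma eqmodZ_sym a b : eqmodZ a b -> eqmodZ b a.
Proof. by rewrite /eqmodZ -opprB rpredN. Qed.

Lemma eqmodZ_trans a b c : eqmodZ a b -> eqmodZ b c -> eqmodZ a c.
Proof. by move=> ab bc; have := rpredD ab bc; rewrite addrA subrK. Qed.

Lemma eqmodZD a b c d : eqmodZ a b -> eqmodZ c d -> eqmodZ (a + c) (b + d).
Proof. by move=> ab cd; rewrite /eqmodZ opprD addrACA rpredD. Qed.

Lemma eqmodZN a b : eqmodZ a b -> eqmodZ (- a) (- b).
Proof. by rewrite /eqmodZ -opprD rpredN. Qed.

Lemma eqmodZB a b c d : eqmodZ a b -> eqmodZ c d -> eqmodZ (a - c) (b - d).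
Proof. by move=> ab /eqmodZN; apply: eqmodZD. Qed.

Lemma eqmodZ_sum I (r : seq I) (F F' : I -> rat) : (forall i, eqmodZ (F i) (F' i)) ->
  eqmodZ (\sum_(i <- r) F i) (\sum_(i <- r) F' i).
Proof. by move=> FF'; rewrite /eqmodZ -sumrB; apply: rpred_sum => i _; apply: FF'. Qed.

Lemma eqmodZ_int a b : eqmodZ a b -> b \is a Num.int -> a \is a Num.int.
Proof. by move=> ab bZ; have := rpredD ab bZ; rewrite subrK. Qed.

Lemma int_subgroup_dvdz (I : int -> Prop) : is_subgroup I ->
  exists d : nat, forall k, I k <-> (d %| k)%Z.
Proof.
move=> HI; have [[k [Ik k_neq0]]|I0] := pselect (exists k, I k /\ k != 0); last first.
  exists 0%N => k; rewrite dvd0z; split=> [Ik|/eqP ->]; last exact: subgroup0.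
  by apply: contraT => k_neq0; case: I0; exists k.
have /ex_minnP[d /asboolP Id d_min] : exists n, `[< I n.+1%:Z >].
  case: k Ik k_neq0 => [[|n]|n] Ik // _; exists n; apply: asboolT => //.
  by rewrite -[Posz _]opprK -NegzE; apply: subgroupN.
have IMd (j : int) : I (j * d.+1) by rewrite mulrC -mulrzz; apply: subgroupMz.
exists d.+1 => {Ik k_neq0}k; split=> [Ik|/dvdzP [j ->] //].
apply/dvdz_mod0P; have Ir : I (k %% d.+1)%Z by apply: subgroupB.
have := modz_ge0 k (isT : d.+1%:Z != 0); have := ltz_pmod k (isT : 0 < d.+1%:Z).
case: (k %% d.+1)%Z Ir => [[|r]|r] //= Ir; rewrite ltz_nat ltnS => r_lt _.
by have := d_min r (asboolT Ir); rewrite leqNgt r_lt.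
Qed.

Lemma natr_inv_notint (R : archiNumFieldType) n : (1 < n)%N -> n%:R^-1 \isn't a @Num.int R.
Proof.
move=> n_gt1; have n_gt0 : 0 < n%:R :> R by rewrite ltr0n ltnW.
apply/negP => /norm_intr_ge1; rewrite invr_eq0 gt_eqF // => /(_ isT).
by rewrite normfV gtr0_norm // invf_ge1 // lern1 leqNgt n_gt1.
Qed.

Section QZCharacters.
Variable G : zmodType.
Implicit Types (U V : G -> Prop) (psi phi : G -> rat).

Definition qz_character U psi :=
  forall a b, U a -> U b -> eqmodZ (psi (a - b)) (psi a - psi b).

Section Character.
Variables (U : G -> Prop) (psi : G -> rat).
Hypotheses (HU : is_subgroup U) (Hpsi : qz_character U psi).

Lemma qz_character0 : eqmodZ (psi 0) 0.
Proof. by have := Hpsi (subgroup0 HU) (subgroup0 HU); rewrite !subrr. Qed.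

Lemma qz_characterN a : U a -> eqmodZ (psi (- a)) (- psi a).
Proof.
move=> Ua; have := Hpsi (subgroup0 HU) Ua; rewrite sub0r => /eqmodZ_trans; apply.
by rewrite -[X in eqmodZ _ X]sub0r; apply: eqmodZB qz_character0 (eqmodZ_refl _).
Qed.

Lemma qz_characterD a b : U a -> U b -> eqmodZ (psi (a + b)) (psi a + psi b).
Proof.
move=> Ua Ub; have := Hpsi Ua (subgroupN HU Ub); rewrite opprK => /eqmodZ_trans; apply.
by rewrite -[psi b]opprK; exact: eqmodZB (eqmodZ_refl _) (qz_characterN Ub).
Qed.

Lemma qz_characterMz a k : U a -> eqmodZ (psi (a *~ k)) (psi a *~ k).
Proof.
move=> Ua; have psiMn m : eqmodZ (psi (a *+ m)) (psi a *+ m).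
  elim: m => [|m IHm]; rewrite ?mulr0n ?qz_character0 // !mulrS.
  apply: eqmodZ_trans (qz_characterD Ua (subgroupMz m HU Ua)) _.
  exact: eqmodZD (eqmodZ_refl _) IHm.
case: k => m; first exact: psiMn.
exact: eqmodZ_trans (qz_characterN (subgroupMz m.+1 HU Ua)) (eqmodZN (psiMn _)).
Qed.

Lemma qz_character_sum I (r : seq I) (F : I -> G) : (forall i, U (F i)) ->
  eqmodZ (psi (\sum_(i <- r) F i)) (\sum_(i <- r) psi (F i)).
Proof.
move=> UF; elim: r => [|i r IHr]; first by rewrite !big_nil qz_character0.
rewrite !big_cons; apply: eqmodZ_trans (eqmodZD (eqmodZ_refl _) IHr).
by apply: qz_characterD => //; apply: subgroup_sum.
Qed.

End Character.

Lemma qz_character_glue U V psi phi : is_subgroup U -> is_subgroup V ->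
  qz_character U psi -> qz_character V phi ->
  (forall z, U z -> V z -> eqmodZ (psi z) (phi z)) ->
  exists2 chi, qz_character (sg_join U V) chi &
    (forall u, U u -> eqmodZ (chi u) (psi u)) /\ (forall w, V w -> eqmodZ (chi w) (phi w)).
Proof.
move=> HU HV Hpsi Hphi psi_phi.
have /choice[dec decP] : forall z, exists uw : G * G, sg_join U V z ->
    [/\ U uw.1, V uw.2 & z = uw.1 + uw.2].
  move=> z; have [/(sg_joinP _ HU HV) [u [w [Uu Vw ->]]]|nJz] := pselect (sg_join U V z).
    by exists (u, w) => _; split.
  by exists (0, 0) => /nJz.
pose chi z := psi (dec z).1 + phi (dec z).2.
(* Two decompositions of the same element differ by an element of [U :&: V]. *)
have chiE u w : U u -> V w -> eqmodZ (chi (u + w)) (psi u + phi w).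
  move=> Uu Vw; have Juw : sg_join U V (u + w) by apply/(sg_joinP _ HU HV); exists u, w.
  rewrite /chi; case: (dec (u + w)) (decP _ Juw) => u' w' /= [Uu' Vw' uw].
  have d_eq : u - u' = w' - w by apply/eqP; rewrite -subr_eq0 opprB addrACA -opprD uw subrr.
  have Vd : V (u - u') by rewrite d_eq; apply: subgroupB.
  have UVd := psi_phi _ (subgroupB HU Uu Uu') Vd.
  rewrite /eqmodZ (_ : _ - _ = psi (u - u') - (psi u - psi u') - (psi (u - u') - phi (u - u'))
                                  - (phi (w' - w) - (phi w' - phi w))); last by rewrite d_eq; ring.
  exact: rpredB (rpredB (Hpsi _ _ Uu Uu') UVd) (Hphi _ _ Vw' Vw).
exists chi; last split.
- move=> _ _ /(sg_joinP _ HU HV) [u [w [Uu Vw ->]]] /(sg_joinP _ HU HV) [u' [w' [Uu' Vw' ->]]].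
  rewrite opprD addrACA.
  apply: eqmodZ_trans (chiE _ _ (subgroupB HU Uu Uu') (subgroupB HV Vw Vw')) _.
  apply: eqmodZ_trans (eqmodZD (Hpsi _ _ Uu Uu') (Hphi _ _ Vw Vw')) _.
  by rewrite addrACA -opprD; apply: eqmodZB; apply/eqmodZ_sym/chiE.
- move=> u Uu; have := chiE _ _ Uu (subgroup0 HV); rewrite addr0 => /eqmodZ_trans; apply.
  by rewrite -[X in eqmodZ _ X]addr0; apply: eqmodZD (eqmodZ_refl _) (qz_character0 HV Hphi).
- move=> w Vw; have := chiE _ _ (subgroup0 HU) Vw; rewrite add0r => /eqmodZ_trans; apply.
  by rewrite -[X in eqmodZ _ X]add0r; apply: eqmodZD (qz_character0 HU Hpsi) (eqmodZ_refl _).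
Qed.

Lemma qz_character_line U psi y : is_subgroup U -> qz_character U psi ->
  exists e : rat, forall k, U (y *~ k) -> eqmodZ (psi (y *~ k)) (e *~ k).
Proof.
move=> HU Hpsi; have [d Hd] := int_subgroup_dvdz (comp_subgroup ( *~%R y) HU).
have {}Hd k : U (y *~ k) <-> (d %| k)%Z := Hd k.
exists (psi (y *~ d) / d%:R) => k /Hd /dvdzP [j ->].
have [->|d_neq0] := eqVneq d 0%N; first by rewrite mulr0 !mulr0z; apply: qz_character0 HU Hpsi.
have eK : psi (y *~ d) / d%:R *~ d = psi (y *~ d).
  by rewrite -[_ *~ _]pmulrn -[X in X = _]mulr_natr divfK ?pnatr_eq0.
rewrite [j * _]mulrC !mulrzA eK.
by apply: (qz_characterMz HU Hpsi); apply/Hd; apply: dvdzz.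
Qed.

(* [U] meets the line through [y] in [d Z] with [d != 1]; take [e = 1/d], or [1/2] if [d = 0]. *)
Lemma subgroup_line_separator U y : is_subgroup U -> ~ U y ->
  exists e : rat, e \isn't a Num.int /\ forall k, U (y *~ k) -> e *~ k \is a Num.int.
Proof.
move=> HU Uy; have [d Hd] := int_subgroup_dvdz (comp_subgroup ( *~%R y) HU).
have {}Hd k : U (y *~ k) <-> (d %| k)%Z := Hd k.
have d_neq1 : d != 1%N by apply/eqP => d1; apply: Uy; rewrite -[y]mulr1z; apply/Hd; rewrite d1.
exists (maxn d 2)%:R^-1; split; first by rewrite natr_inv_notint // leq_max orbT.
move=> k /Hd; have [->|d_gt0] := posnP d; first by rewrite dvd0z => /eqP ->; rewrite mulr0z rpred0.
have /maxn_idPl -> : (2 <= d)%N by rewrite ltn_neqAle eq_sym d_neq1.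
case/dvdzP=> j ->; rewrite [j * _]mulrC mulrzA -[_^-1 *~ _]pmulrn -[_^-1 *+ _]mulr_natr.
rewrite mulVf ?pnatr_eq0 -?lt0n //.
Qed.

End QZCharacters.

Section FreeAbelianGroup.
Variable n : nat.
Local Notation zvec := {ffun 'I_n -> int}.
Local Notation qvec := {ffun 'I_n -> rat}.
Implicit Types (U S T : zvec -> Prop) (psi : zvec -> rat) (c : qvec).
Implicit Types (y : zvec) (j : 'I_n) (e : rat).

Definition dotq c (s : zvec) : rat := \sum_i c i * (s i)%:~R.

Lemma dotq_is_zmod_morphism c : zmod_morphism (dotq c).
Proof.
by move=> a b; rewrite /dotq -sumrB; apply: eq_bigr => i _; rewrite !ffunE intrB mulrBr.
Qed.

HB.instance Definition _ c :=
  GRing.isZmodMorphism.Build zvec rat (dotq c) (dotq_is_zmod_morphism c).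

Lemma dotq0l s : dotq 0 s = 0.
Proof. by rewrite /dotq big1 // => i _; rewrite ffunE mul0r. Qed.

Lemma dotqBl c c' s : dotq (c - c') s = dotq c s - dotq c' s.
Proof. by rewrite /dotq -sumrB; apply: eq_bigr => i _; rewrite !ffunE mulrBl. Qed.

Definition deltaf (j : 'I_n) : zvec := [ffun i => (i == j)%:R].

Lemma zvec_expand (a : zvec) : a = \sum_j deltaf j *~ a j.
Proof.
apply/ffunP => i; rewrite sum_ffunE (bigD1 i) //= big1 => [|j ji].
  by rewrite ffunMzE ffunE eqxx mulr1n intz addr0.
by rewrite ffunMzE ffunE eq_sym (negbTE ji) mul0rz.
Qed.

Lemma dotq_deltaf c j k : dotq c (deltaf j *~ k) = c j * k%:~R.
Proof.
rewrite /dotq (bigD1 j) //= big1 => [|i ij].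
  by rewrite ffunMzE ffunE eqxx mulr1n intz addr0.
by rewrite ffunMzE ffunE (negbTE ij) mul0rz mulr0.
Qed.

(* On the line through [y] the coordinate [z_j] determines [z], so [z |-> e z_j / y_j]
   is an exact character there. *)
Lemma qz_character_extend_line U psi y j e :
  is_subgroup U -> qz_character U psi -> y j != 0 ->
  (forall k, U (y *~ k) -> eqmodZ (psi (y *~ k)) (e *~ k)) ->
  exists2 chi, qz_character (sg_join U (sg_cyclic y)) chi &
    (forall u, U u -> eqmodZ (chi u) (psi u)) /\ eqmodZ (chi y) e.
Proof.
move=> HU Hpsi yj_neq0 psi_line.
have yj_neq0' : (y j)%:~R != 0 :> rat by rewrite intr_eq0.
pose phi (z : zvec) := e * (z j)%:~R / (y j)%:~R.
have Hphi : qz_character (sg_cyclic y) phi.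
  by move=> a b _ _; rewrite /phi !ffunE intrB mulrBr mulrBl; apply: eqmodZ_refl.
have [|chi Hchi [chi_psi chi_phi]] := qz_character_glue HU (sg_cyclic_subgroup y) Hpsi Hphi.
  move=> z Uz [k kz]; subst z; rewrite /phi ffunMzE mulrzz intrM mulrA mulrAC mulfK //.
  by rewrite mulrzr; apply: psi_line.
exists chi => //; split => //.
by have := chi_phi y (sg_cyclic_gen y); rewrite /phi mulfK.
Qed.

Lemma qz_character_extend_basis (js : seq 'I_n) U psi :
  is_subgroup U -> qz_character U psi ->
  exists U' chi, [/\ is_subgroup U', qz_character U' chi,
    forall u, U u -> U' u /\ eqmodZ (chi u) (psi u) & forall j, j \in js -> U' (deltaf j)].
Proof.
elim: js U psi => [|j js IHjs] U psi HU Hpsi.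
  by exists U, psi; split=> // u Uu; split=> //; apply: eqmodZ_refl.
have [e psi_line] := qz_character_line (deltaf j) HU Hpsi.
have djj_neq0 : deltaf j j != 0 by rewrite ffunE eqxx.
have [chi Hchi [chi_psi _]] := qz_character_extend_line HU Hpsi djj_neq0 psi_line.
have [U' [chi' [HU' Hchi' chi'_chi Ujs]]] := IHjs _ _ (sg_join_subgroup _ _) Hchi.
exists U', chi'; split=> // [u Uu|i].
  have [U'u chi'u] := chi'_chi u (sg_joinl Uu); split=> //.
  exact: eqmodZ_trans chi'u (chi_psi u Uu).
rewrite in_cons => /predU1P [->|]; last exact: Ujs.
by case: (chi'_chi _ (sg_joinr (sg_cyclic_gen (deltaf j)))).
Qed.

Lemma qz_character_extend U psi : is_subgroup U -> qz_character U psi ->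
  exists c, forall u, U u -> eqmodZ (dotq c u) (psi u).
Proof.
move=> HU Hpsi.
have [U' [chi [HU' Hchi chi_psi Udelta]]] := qz_character_extend_basis (enum 'I_n) HU Hpsi.
pose c := [ffun j => chi (deltaf j)]; exists c => u Uu; have [U'u chi_u] := chi_psi u Uu.
apply: eqmodZ_trans chi_u; apply: eqmodZ_sym.
have -> : dotq c u = \sum_j dotq c (deltaf j *~ u j) by rewrite -raddf_sum -zvec_expand.
rewrite {1}(zvec_expand u); apply: eqmodZ_trans (qz_character_sum HU' Hchi _ _) _ => [j|].
  by apply: subgroupMz => //; apply: Udelta; rewrite mem_enum.
apply: eqmodZ_sum => j; rewrite dotq_deltaf ffunE mulrzr.
by apply: (qz_characterMz HU' Hchi); apply: Udelta; rewrite mem_enum.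
Qed.

Definition annihilator S : qvec -> Prop := fun c => forall s, S s -> dotq c s \is a Num.int.

Lemma annihilator_subgroup S : is_subgroup (annihilator S).
Proof.
split=> [s _|c c' Sc Sc' s Ss]; first by rewrite dotq0l rpred0.
by rewrite dotqBl rpredB ?Sc ?Sc'.
Qed.

Lemma annihilator_join S T c :
  annihilator (sg_join S T) c <-> annihilator S c /\ annihilator T c.
Proof.
split=> [Jc|[Sc Tc] s]; first by split=> s Ss; apply: Jc; [apply: sg_joinl|apply: sg_joinr].
apply: (sg_join_min (U := fun s => dotq c s \is a Num.int)) => //.
by split=> [|a b aZ bZ]; rewrite ?raddf0 ?rpred0 // raddfB rpredB.
Qed.

Lemma annihilator_separates S x : is_subgroup S -> ~ S x ->
  exists2 c, annihilator S c & dotq c x \isn't a Num.int.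
Proof.
move=> HS Sx; have [e [e_notZ eS]] := subgroup_line_separator HS Sx.
have /existsP [j xj_neq0] : [exists j, x j != 0].
  apply: contraT => /existsPn x0; exfalso; apply: Sx; suff -> : x = 0 by apply: subgroup0.
  by apply/ffunP => j; apply/eqP; rewrite ffunE; apply: negbNE.
have H0 : qz_character S (fun=> 0) by move=> *; rewrite subrr; apply: eqmodZ_refl.
have [|chi Hchi [chi_0 chi_e]] := qz_character_extend_line HS H0 xj_neq0 (e := e).
  by move=> k /eS eZ; rewrite /eqmodZ sub0r rpredN.
have [c c_chi] := qz_character_extend (sg_join_subgroup _ _) Hchi.
exists c => [s Ss|].
  by apply: eqmodZ_int (eqmodZ_trans (c_chi _ (sg_joinl Ss)) (chi_0 _ Ss)) (rpred0 _).
apply: contra e_notZ => cxZ; apply: eqmodZ_int cxZ.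
exact: eqmodZ_trans (eqmodZ_sym chi_e) (eqmodZ_sym (c_chi _ (sg_joinr (sg_cyclic_gen x)))).
Qed.

(* Glue [0] on [S] with [dotq c] on [T]; an extension [dotq a] splits [c = a + (c - a)]. *)
Lemma annihilator_meet S T c : is_subgroup S -> is_subgroup T ->
  annihilator (sg_meet S T) c -> sg_join (annihilator S) (annihilator T) c.
Proof.
move=> HS HT STc.
have H0 : qz_character S (fun=> 0) by move=> *; rewrite subrr; apply: eqmodZ_refl.
have Hc : qz_character T (dotq c) by move=> a b _ _; rewrite raddfB; apply: eqmodZ_refl.
have [|chi Hchi [chi_0 chi_c]] := qz_character_glue HS HT H0 Hc.
  by move=> z Sz Tz; rewrite /eqmodZ sub0r rpredN; apply: STc.
have [a a_chi] := qz_character_extend (sg_join_subgroup _ _) Hchi.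
apply/sg_joinP; try exact: annihilator_subgroup.
exists a, (c - a); split; last by rewrite addrC subrK.
  move=> s Ss; apply: eqmodZ_int (eqmodZ_trans (a_chi _ (sg_joinl Ss)) (chi_0 _ Ss)) (rpred0 _).
move=> t Tt; rewrite dotqBl -opprB rpredN.
exact: eqmodZ_trans (a_chi _ (sg_joinr Tt)) (chi_c _ Tt).
Qed.

Lemma sg_eval_annihilator (u : nat -> zvec -> Prop) : (forall i, is_subgroup (u i)) ->
  forall t c, sg_eval (fun i => annihilator (u i)) (ldual t) c <-> annihilator (sg_eval u t) c.
Proof.
move=> Hu; elim=> [i|s IHs t IHt|s IHs t IHt] c //=.
  by rewrite /sg_meet IHs IHt annihilator_join.
rewrite (sg_join_ext IHs IHt); split; last by apply: annihilator_meet; apply: sg_eval_subgroup.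
apply: sg_join_min; first exact: annihilator_subgroup.
  by move=> a Sa z [Sz _]; apply: Sa.
by move=> a Ta z [_ Tz]; apply: Ta.
Qed.

End FreeAbelianGroup.

Definition ffun_intmul (I : finType) (V : zmodType) (x : V) (a : {ffun I -> int}) :
  {ffun I -> V} := [ffun i => x *~ a i].

Lemma ffun_intmul_is_zmod_morphism I V x : zmod_morphism (@ffun_intmul I V x).
Proof. by move=> a b; apply/ffunP => i; rewrite !ffunE mulrzBr. Qed.

HB.instance Definition _ I V x :=
  GRing.isZmodMorphism.Build _ _ (@ffun_intmul I V x) (@ffun_intmul_is_zmod_morphism I V x).

Definition combination (A : zmodType) (W : seq A) (k : {ffun 'I_(size W) -> int}) : A :=
  \sum_(i < size W) W`_i *~ k i.
Arguments combination {A} W k.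

Lemma combination_is_zmod_morphism A W : zmod_morphism (@combination A W).
Proof.
by move=> a b; rewrite /combination -sumrB; apply: eq_bigr => i _; rewrite !ffunE mulrzBr.
Qed.

HB.instance Definition _ A W :=
  GRing.isZmodMorphism.Build _ _ (@combination A W) (@combination_is_zmod_morphism A W).

Lemma combination_onto (A : zmodType) (W : seq A) w : w \in W -> exists k, combination W k = w.
Proof.
move=> Ww; have Wi : (index w W < size W)%N by rewrite index_mem.
exists (deltaf (Ordinal Wi)); rewrite /combination (bigD1 (Ordinal Wi)) //= big1 => [|i].
  by rewrite ffunE eqxx mulr1z addr0 nth_index.
by rewrite ffunE => /negbTE ->; rewrite mulr0z.
Qed.

Lemma Zp1Mz_eq0 (p' : nat) (z : int) : ((Zp1 : 'I_p'.+1) *~ z == 0) = (p'.+1%:Z %| z)%Z.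
Proof.
have Zp1Mn_eq0 k : ((Zp1 : 'I_p'.+1) *+ k == 0) = (p'.+1 %| k)%N.
  by rewrite -val_eqE /= Zp_mulrn /= modnMml mul1n.
by case: z => k; rewrite /intmul ?oppr_eq0 Zp1Mn_eq0.
Qed.

Lemma Zp_mulrn_order (p' : nat) (x : 'I_p'.+1) : x *+ p'.+1 = 0.
Proof. by apply/val_inj; rewrite Zp_mulrn /= modnMl. Qed.

Definition refutes (A : zmodType) (p q : lterm) : Prop :=
  exists2 v : nat -> A -> Prop, (forall i, is_subgroup (v i)) &
    exists x, sg_eval v p x /\ ~ sg_eval v q x.

Lemma holds_in_SubP A p q : holds_in_Sub A p q <-> ~ refutes A p q /\ ~ refutes A q p.
Proof.
split=> [Hpq|[npq nqp] v Hv x].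
  by split=> -[v Hv [x [px nqx]]]; apply: nqx; apply/(Hpq v Hv).
by split=> [px|qx]; apply: contrapT => nx; [apply: npq|apply: nqp]; exists v => //; exists x.
Qed.

Lemma refutes_in_free_group m (A : zmodType) p q :
  (forall x : A, x *+ m = 0) -> refutes A p q ->
  exists n (u : nat -> {ffun 'I_n -> int} -> Prop),
    [/\ forall i, is_subgroup (u i), forall i a, u i (a *~ m) &
       exists k, sg_eval u p k /\ ~ sg_eval u q k].
Proof.
move=> Am [v Hv [x [px nqx]]]; have [W HW] := sg_eval_finitely_generated Hv px.
have [k gk] := combination_onto (mem_head x W).
exists (size (x :: W)), (fun i => v i \o combination (x :: W)); split=> [i|i a|].
- exact: comp_subgroup.
- by rewrite /= raddfMz -pmulrn Am; apply: subgroup0.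
exists k; split; last by move/(sg_eval_comp_le Hv); rewrite /= gk.
apply: HW gk => w Ww; apply: combination_onto; exact: mem_behead.
Qed.

Lemma annihilator_refutes n (u : nat -> {ffun 'I_n -> int} -> Prop) p q :
  (forall i, is_subgroup (u i)) -> (exists k, sg_eval u p k /\ ~ sg_eval u q k) ->
  exists c, sg_eval (fun i => annihilator (u i)) (ldual q) c /\
           ~ sg_eval (fun i => annihilator (u i)) (ldual p) c.
Proof.
move=> Hu [k [pk nqk]].
have [c qc /negP ck] := annihilator_separates (sg_eval_subgroup Hu q) nqk.
by exists c; rewrite !sg_eval_annihilator //; split=> // pc; apply/ck/pc.
Qed.

(* Annihilators contain [Z^n] and lie in [(1/m) Z^n]; scaling by [m] and reducing mod [m]
   identifies this interval with the subgroups of [('I_m)^n]. *)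
Lemma refutes_annihilator_mod (m' n : nat) (u : nat -> {ffun 'I_n -> int} -> Prop) p q :
  (forall i, is_subgroup (u i)) -> (forall i a, u i (a *~ m'.+1)) ->
  (exists c, sg_eval (fun i => annihilator (u i)) p c /\
            ~ sg_eval (fun i => annihilator (u i)) q c) ->
  refutes {ffun 'I_n -> 'I_m'.+1} p q.
Proof.
move=> Hu um [c [pc nqc]].
pose w i := annihilator (u i); have Hw i : is_subgroup (w i) by apply: annihilator_subgroup.
pose M : rat := (m'.+1%:Z)%:~R; have M_neq0 : M != 0 by rewrite intr_eq0.
pose divM := @ffun_intmul 'I_n _ M^-1; pose modM := @ffun_intmul 'I_n _ (Zp1 : 'I_m'.+1).
have w_divM i c' : w i c' -> exists a, divM a = c'.
  move=> wc'; exists [ffun j => Num.floor (c' j * M)]; apply/ffunP => j.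
  have /wc' : u i (deltaf j *~ m'.+1) by apply: um.
  rewrite dotq_deltaf ffunE => cjM.
  by rewrite ffunE -mulrzr floorK // [_ * M]mulrC mulKf.
have ker_modM i a : modM a = 0 -> (w i \o divM) a.
  move=> /ffunP a0 s _; apply: rpred_sum => j _; apply: rpredM; last exact: intr_int.
  move: (a0 j); rewrite !ffunE => /eqP; rewrite Zp1Mz_eq0 => /dvdzP [z ->].
  by rewrite -mulrzr intrM mulrCA mulVf // mulr1 intr_int.
have Hw' i : is_subgroup (w i \o divM) by apply: comp_subgroup.
have [a ac] := sg_eval_in_range Hw w_divM pc; subst c.
exists (fun i => sg_image modM (w i \o divM)) => [i|]; first exact: sg_image_subgroup.
exists (modM a); rewrite !sg_eval_image // !sg_eval_comp //.
Qed.

Lemma refutes_ldual m p q :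
  (exists2 A : zmodType, (forall x : A, x *+ m = 0) & refutes A p q) ->
  exists2 B : zmodType, (forall x : B, x *+ m = 0) & refutes B (ldual q) (ldual p).
Proof.
case=> A Am /(refutes_in_free_group Am) [n [u [Hu um /(annihilator_refutes Hu) qp_dual]]].
case: m Am um => [|m'] _ um.
  exists {ffun 'I_n -> rat} => [x|]; first by rewrite mulr0n.
  by exists (fun i => annihilator (u i)) => [i|//]; apply: annihilator_subgroup.
exists {ffun 'I_n -> 'I_m'.+1} => [x|]; last exact: refutes_annihilator_mod.
by apply/ffunP => j; rewrite ffunMnE Zp_mulrn_order ffunE.
Qed.

Lemma holds_in_Sub_exp_ldual m p q :
  holds_in_Sub_exp m p q -> holds_in_Sub_exp m (ldual p) (ldual q).
Proof.
move=> Hpq A Am; apply/holds_in_SubP; split=> refA;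
have [B Bm] := refutes_ldual (ex_intro2 _ _ A Am refA); rewrite !ldualK => refB;
by have /holds_in_SubP[] := Hpq B Bm.
Qed.

Theorem corollary5p2 (m : nat) (p q : lterm) :
  holds_in_Sub_exp m p q <-> holds_in_Sub_exp m (ldual p) (ldual q).
Proof.
split; first exact: holds_in_Sub_exp_ldual.
by move/holds_in_Sub_exp_ldual; rewrite !ldualK.
Qed.
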